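(* Let $n,d$ be positive integers and let $T=(T_1,\ldots,T_d)$ be a commuting contractive operator-valued multishift on $\ell^2_{\mathbb C^n}(\mathbb N^d)$ whose operator weights are invertible $n\times n$ diagonal matrices. Then $T$ satisfies the von Neumann's inequality, i.e. $\|p(T)\|\le\sup_{z\in\mathbb D^d}|p(z)|$ for every polynomial $p\in\mathbb C[z_1,\ldots,z_d]$.
   Context: $\mathbb N$ denotes the nonnegative integers; $\varepsilon_j\in\mathbb N^d$ has $1$ in the $j$-th place and $0$ elsewhere; $\mathbb D^d$ is the open unit polydisc. $\ell^2_{H}(\mathbb N^d)=\bigoplus_{\alpha\in\mathbb N^d}H$. Given bounded operators $A^{(j)}_\alpha:H\to H$ ($\alpha\in\mathbb N^d$, $j=1,\ldots,d$), the operator-valued multishift with these operator weights is the $d$-tuple defined by $T_j(\oplus_\alpha x_\alpha)=\oplus_\alpha A^{(j)}_{\alpha-\varepsilon_j}x_{\alpha-\varepsilon_j}$ (the term being $0$ when $\alpha_j=0$). It is a commuting operator-valued multishift if $\sup_\alpha\|A^{(j)}_\alpha\|<\infty$ for each $j$ and $A^{(i)}_{\alpha+\varepsilon_j}A^{(j)}_\alpha=A^{(j)}_{\alpha+\varepsilon_i}A^{(i)}_\alpha$ for all $\alpha$ and all $i,j$. It is contractive if each $T_j$ has norm at most $1$. For $p(z)=\sum a_\alpha z^\alpha$, $p(T)=\sum a_\alpha T_1^{\alpha_1}\cdots T_d^{\alpha_d}$. *)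

From HB Require Import structures.
From mathcomp Require Import all_boot all_order all_algebra.
From mathcomp Require Import all_classical all_reals all_analysis.
From mathcomp Require Import complex.
From mathcomp Require mpoly.

Set Implicit Arguments.
Unset Strict Implicit.
Unset Printing Implicit Defensive.
Import Order.TTheory GRing.Theory Num.Theory.
Local Open Scope ring_scope.

Definition mindex (d : nat) := {ffun 'I_d -> nat}.

(* alpha + eps_j and alpha - eps_j (the latter only used when alpha_j > 0) *)
Definition addeps (d : nat) (a : mindex d) (j : 'I_d) : mindex d :=
  [ffun k => (a k + (k == j))%N].
Definition subeps (d : nat) (a : mindex d) (j : 'I_d) : mindex d :=
  [ffun k => (a k - (k == j))%N].

Definition cabs (R : realType) (z : R[i]) : R := Normc.normc z.

Definition vnorm2 (R : realType) (n : nat) (v : 'cV[R[i]]_n) : R :=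
  \sum_(k < n) cabs (v k ord0) ^+ 2.

(* squared norm on l^2_{C^n}(N^d) (possibly +oo for sequences outside l^2) *)
Definition l2norm2 (R : realType) (d n : nat) (x : mindex d -> 'cV[R[i]]_n) : \bar R :=
  (\esum_(a in [set: mindex d]) (vnorm2 (x a))%:E)%E.

Definition mshift (R : realType) (d n : nat) (A : 'I_d -> mindex d -> 'M[R[i]]_n)
  (j : 'I_d) (x : mindex d -> 'cV[R[i]]_n) : mindex d -> 'cV[R[i]]_n :=
  fun a => if a j == 0%N then 0 else A j (subeps a j) *m x (subeps a j).

Definition mshift_mono (R : realType) (d n : nat) (A : 'I_d -> mindex d -> 'M[R[i]]_n)
  (m : 'I_d -> nat) (x : mindex d -> 'cV[R[i]]_n) : mindex d -> 'cV[R[i]]_n :=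
  foldr (fun j y => iter (m j) (mshift A j) y) x (enum 'I_d).

Definition polyT (R : realType) (d n : nat) (A : 'I_d -> mindex d -> 'M[R[i]]_n)
  (p : mpoly.mpoly d R[i]) (x : mindex d -> 'cV[R[i]]_n) : mindex d -> 'cV[R[i]]_n :=
  fun a => \sum_(m <- mpoly.msupp p)
             mpoly.mcoeff m p *: mshift_mono A (mpoly.fun_of_multinom m) x a.

(* Since the weights are diagonal, each coordinate k of T is a scalar weighted
   multishift with commuting nonzero weights. Multiplication by the product
   w_k(a) of the weights along a monotone lattice path from 0 to a conjugates
   it to the unweighted multishift S, so that
     |p(T)x|^2 = sum_k sum_a |w_k(a)|^2 |(p(S) y_k)(a)|^2,   y_k = x_k / w_k.
   Contractivity bounds every weight by 1 in modulus, so |w_k|^2 is antitone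
   for the coordinatewise order, i.e. a positive combination of indicators of
   down-sets; on a down-set p(S) only sees the restriction of y_k. This reduces
   everything to |p(S) y| <= M |y| for finitely supported y, which follows from
   Parseval's identity for generating functions evaluated on a grid r * zeta,
   zeta ranging over roots of unity, r < 1, and letting r tend to 1. *)

From HB Require Import structures.
From mathcomp Require Import all_boot all_order all_algebra.
From mathcomp Require Import all_classical all_reals all_analysis.
From mathcomp Require Import complex.
From mathcomp Require mpoly cyclic cyclotomic separable.
Import (canonicals, coercions) mpoly.
From mathcomp Require Import ring lra zify.
Import Order.TTheory GRing.Theory Num.Theory.
Local Open Scope ring_scope.

Set Implicit Arguments.
Unset Strict Implicit.
Unset Printing Implicit Defensive.

Lemma ler_sum_sub_uniq (T : eqType) (R : numDomainType) (s1 s2 : seq T) (f : T -> R) :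
  uniq s1 -> uniq s2 -> {subset s1 <= s2} -> {in s2, forall x, 0 <= f x} ->
  \sum_(x <- s1) f x <= \sum_(x <- s2) f x.
Proof.
move=> u1 u2 sub f0.
rewrite [leRHS](bigID (fun x => x \in s1)) /=.
have -> : \sum_(x <- s2 | x \in s1) f x = \sum_(x <- s1) f x.
  rewrite -big_filter; apply: perm_big; apply: uniq_perm => [||x].
  - exact: filter_uniq.
  - exact: u1.
  - by rewrite mem_filter; case: (boolP (x \in s1)) => // /sub ->.
rewrite lerDl big_seq_cond; apply: sumr_ge0 => x /andP[xs _]; exact: f0.
Qed.

Lemma sum_reindex_supp (T1 T2 : eqType) (V : nmodType) (s1 : seq T1) (s2 : seq T2)
    (phi : T1 -> T2) (G : T2 -> V) :
  uniq s1 -> uniq s2 -> {in s1 &, injective phi} -> {in s1, forall b, phi b \in s2} ->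
  {in s2, forall a, a \notin map phi s1 -> G a = 0} ->
  \sum_(a <- s2) G a = \sum_(b <- s1) G (phi b).
Proof.
move=> u1 u2 inj sub supp.
rewrite -(big_map phi predT G) (bigID (fun a => a \in map phi s1)) /=.
rewrite [X in _ + X]big_seq_cond [X in _ + X]big1 ?addr0; last first.
  by move=> a /andP[as2]; exact: supp.
rewrite -big_filter; apply: perm_big; apply: uniq_perm => [||a].
- exact: filter_uniq.
- by rewrite map_inj_in_uniq.
- rewrite mem_filter; case: (boolP (a \in map phi s1)) => //= /mapP[b bs ->].
  by rewrite sub.
Qed.

Lemma count_predD1 (T : eqType) (P : pred T) (s : seq T) (x : T) :
  uniq s -> x \in s -> count P s = (P x + count (predD1 P x) s)%N.
Proof.
elim: s => [//|y s IH] /= /andP[ys us]; rewrite in_cons.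
case: (eqVneq x y) ys => [<- xs _|nxy ys /= xs].
  rewrite /= add0n; congr (_ + _)%N; apply: eq_in_count => z zs /=.
  by rewrite (_ : z != x) //; apply: contraNneq xs => <-.
rewrite (IH us xs); lia.
Qed.

Lemma exists_argmin_seq (T : eqType) (R : realDomainType) (s : seq T) (f : T -> R) :
  s != [::] -> exists2 x, x \in s & {in s, forall y, f x <= f y}.
Proof.
elim: s => [//|y s IH] _.
case: (eqVneq s [::]) => [->|sn].
  by exists y; rewrite ?mem_seq1 // => z; rewrite mem_seq1 => /eqP ->.
have [x xs xm] := IH sn.
case: (lerP (f y) (f x)) => [yx|xy].
  exists y => [|z]; first by rewrite mem_head.
  rewrite in_cons => /orP[/eqP ->//|/xm]; exact: le_trans.
exists x => [|z]; first by rewrite in_cons xs orbT.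
rewrite in_cons => /orP[/eqP ->|/xm//]; exact: ltW.
Qed.

Section MultiIndices.
Variable d : nat.
Implicit Types a b m : mindex d.

Definition mle b a : bool := [forall j, b j <= a j]%N.
Definition msub a m : mindex d := [ffun j => a j - m j]%N.
Definition madd a m : mindex d := [ffun j => a j + m j]%N.
Definition msum a : nat := (\sum_(j < d) a j)%N.

Definition mbox (N : nat) : seq (mindex d) :=
  [seq [ffun j => nat_of_ord (f j)] | f : {ffun 'I_d -> 'I_N} <- enum {ffun 'I_d -> 'I_N}].

Lemma mem_mbox N a : (a \in mbox N) = [forall j, a j < N]%N.
Proof.
apply/mapP/forallP => [[f _ ->] j|aN]; first by rewrite ffunE ltn_ord.
exists [ffun j => Ordinal (aN j)]; first by rewrite mem_enum.
by apply/ffunP => j; rewrite !ffunE.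
Qed.

Lemma mbox_uniq N : uniq (mbox N).
Proof.
rewrite map_inj_uniq ?enum_uniq // => f g /ffunP fg.
by apply/ffunP => j; apply: val_inj; have := fg j; rewrite !ffunE.
Qed.

Lemma mbox_mle N a b : mle b a -> a \in mbox N -> b \in mbox N.
Proof.
move=> /forallP ba; rewrite !mem_mbox => /forallP aN; apply/forallP => j.
exact: leq_ltn_trans (ba j) (aN j).
Qed.

Lemma sub_mbox N K : (N <= K)%N -> {subset mbox N <= mbox K}.
Proof.
move=> NK a; rewrite !mem_mbox => /forallP aN; apply/forallP => j.
exact: leq_trans (aN j) NK.
Qed.

Lemma sum_mbox_supp (V : nmodType) N K (F : mindex d -> V) :
  (N <= K)%N -> (forall a, a \notin mbox N -> F a = 0) ->
  \sum_(a <- mbox K) F a = \sum_(a <- mbox N) F a.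
Proof.
move=> NK F0; rewrite (@sum_reindex_supp _ _ _ (mbox N) (mbox K) id F) //.
- exact: mbox_uniq.
- exact: mbox_uniq.
- exact: sub_mbox.
- by move=> a _; rewrite map_id; exact: F0.
Qed.

Lemma mle_msub a m : mle (msub a m) a.
Proof. by apply/forallP => j; rewrite ffunE leq_subr. Qed.

Lemma mle_madd a m : mle m (madd a m).
Proof. by apply/forallP => j; rewrite ffunE leq_addl. Qed.

Lemma maddK m : cancel (madd ^~ m) (msub ^~ m).
Proof. by move=> a; apply/ffunP => j; rewrite !ffunE addnK. Qed.

Lemma msubK a m : mle m a -> madd (msub a m) m = a.
Proof. by move=> /forallP ma; apply/ffunP => j; rewrite !ffunE subnK. Qed.

Lemma leq_msum a j : (a j <= msum a)%N.
Proof. by rewrite /msum (bigD1 j) //= leq_addr. Qed.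

Lemma msum_mbox N a : a \in mbox N -> (msum a <= d * N)%N.
Proof.
rewrite mem_mbox => /forallP aN.
rewrite /msum -[X in (_ <= X * _)%N]card_ord -sum_nat_const.
by apply: leq_sum => j _; apply: ltnW.
Qed.

Lemma subepsE a j i : subeps a j i = (a i - (i == j))%N.
Proof. by rewrite ffunE. Qed.

Lemma addepsK (j : 'I_d) : cancel (fun a : mindex d => addeps a j) (fun a => subeps a j).
Proof. by move=> a; apply/ffunP => i; rewrite !ffunE addnK. Qed.

Lemma subepsK a j : (0 < a j)%N -> addeps (subeps a j) j = a.
Proof.
move=> aj; apply/ffunP => i; rewrite !ffunE.
by case: (eqVneq i j) => [->|_]; rewrite ?subnK // !subn0 addn0.
Qed.

Lemma subeps_addeps a i j : i != j -> subeps (addeps a j) i = addeps (subeps a i) j.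
Proof.
move=> ij; apply/ffunP => l; rewrite !ffunE.
by case: (eqVneq l i) => [->|li]; rewrite ?(negbTE ij) ?addn0 ?subn0.
Qed.

Lemma msum_addeps a j : msum (addeps a j) = (msum a).+1.
Proof.
rewrite /msum (bigD1 j) //= [in RHS](bigD1 j) //= ffunE eqxx addn1 addSn.
by congr (_ + _)%N.+1; apply: eq_bigr => i ij; rewrite ffunE (negbTE ij) addn0.
Qed.

End MultiIndices.

Section ComplexModulus.
Variable R : realType.
Local Open Scope complex_scope.
Implicit Types z w : R[i].

Lemma cabsE z : (cabs z)%:C = `|z|. Proof. by []. Qed.

Lemma cabs_ge0 z : 0 <= cabs z.
Proof. by rewrite -(@lecR R) cabsE normr_ge0. Qed.

Lemma cabs2_ge0 z : 0 <= cabs z ^+ 2.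
Proof. by rewrite exprn_ge0 // cabs_ge0. Qed.

Lemma cabsM z w : cabs (z * w) = cabs z * cabs w.
Proof. exact: Normc.normcM. Qed.

Lemma cabsX z k : cabs (z ^+ k) = cabs z ^+ k.
Proof. by apply: (@complexI R); rewrite cabsE normrX rmorphXn. Qed.

Lemma ger0_cabs (s : R) : 0 <= s -> cabs s%:C = s.
Proof. by move=> s0; apply: (@complexI R); rewrite cabsE ger0_norm // lecR. Qed.

Lemma cabs2E z : (cabs z ^+ 2)%:C = (z * z^*)%R.
Proof. by rewrite -normCK -cabsE rmorphXn. Qed.

Lemma cabs0 : cabs (0 : R[i]) = 0.
Proof. exact: ger0_cabs. Qed.

Lemma cabs1 : cabs (1 : R[i]) = 1.
Proof. exact: ger0_cabs. Qed.

End ComplexModulus.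

Lemma sum_unity_root_eq0 (F : idomainType) (K : nat) (rho : F) :
  rho ^+ K = 1 -> rho != 1 -> \sum_(t < K) rho ^+ t = 0.
Proof.
move=> rhoK rho1; have := subrX1 rho K; rewrite rhoK subrr => /esym/eqP.
by rewrite mulf_eq0 subr_eq0 (negbTE rho1) => /eqP.
Qed.

Definition mmono (F : comNzRingType) (d : nat) (z : 'I_d -> F) (a : mindex d) : F :=
  \prod_(j < d) z j ^+ a j.

Lemma mmono_scale (F : comNzRingType) (d : nat) (c : F) (z : 'I_d -> F) (a : mindex d) :
  mmono (fun j => c * z j) a = c ^+ msum a * mmono z a.
Proof. by rewrite /mmono; under eq_bigr do rewrite exprMn; rewrite big_split /= prodrXr. Qed.

Lemma conj_norm1 (C : numClosedFieldType) (z : C) : `|z| = 1 -> z^* = z^-1.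
Proof. by move=> z1; rewrite invC_norm z1 expr1n invr1 mul1r. Qed.

Section RootOfUnityGrid.
Variables (R : realType) (d K : nat) (w : R[i]).
Hypothesis w_prim : K.-primitive_root w.

Let wK : w ^+ K = 1 := prim_expr_order w_prim.

Lemma norm_prim_root : `|w| = 1.
Proof.
have : `|w| ^+ K == 1 by rewrite -normrX wK normr1.
by rewrite pexpr_eq1 ?normr_ge0 ?(prim_order_gt0 w_prim) // => /eqP.
Qed.

Lemma sum_prim_root_orth (x y : nat) : (x < K)%N -> (y < K)%N ->
  \sum_(t < K) (w ^+ t) ^+ x * ((w ^+ t) ^+ y)^* = if x == y then K%:R else 0.
Proof.
move=> xK yK; pose rho := w ^+ x / w ^+ y.
have -> : \sum_(t < K) (w ^+ t) ^+ x * ((w ^+ t) ^+ y)^* = \sum_(t < K) rho ^+ t.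
  apply: eq_bigr => t _; rewrite conj_norm1 ?normrX ?norm_prim_root ?expr1n //.
  by rewrite -!exprM exprMn exprVn -!exprM !(mulnC t).
have rhoK : rho ^+ K = 1.
  by rewrite exprMn exprVn -!exprM !(mulnC _ K) !exprM wK !expr1n invr1 mulr1.
case: eqVneq => [xy|xy].
  have w0 : w != 0 by rewrite (prim_root_eq0 w_prim) -lt0n (prim_order_gt0 w_prim).
  rewrite /rho xy mulfV ?expf_neq0 //; under eq_bigr do rewrite expr1n.
  by rewrite sumr_const card_ord.
apply: sum_unity_root_eq0 rhoK _; apply: contra_neq xy => /divr1_eq/eqP.
by rewrite (eq_prim_root_expr w_prim) !modn_small // => /eqP.
Qed.

Definition grid_pt (k : {ffun 'I_d -> 'I_K}) : 'I_d -> R[i] := fun j => w ^+ k j.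

Lemma sum_grid_mmono_conj a b : a \in mbox d K -> b \in mbox d K ->
  \sum_(k : {ffun 'I_d -> 'I_K}) mmono (grid_pt k) a * (mmono (grid_pt k) b)^*
  = if a == b then (K ^ d)%:R else 0.
Proof.
rewrite !mem_mbox => /forallP aK /forallP bK.
transitivity (\prod_(j < d) \sum_(t < K) (w ^+ t) ^+ a j * ((w ^+ t) ^+ b j)^*).
  rewrite bigA_distr_bigA; apply: eq_bigr => k _.
  by rewrite /mmono rmorph_prod -big_split.
under eq_bigr do rewrite sum_prim_root_orth //.
case: eqVneq => [<-|ab].
  by rewrite (eq_bigr (fun _ => K%:R)) ?prodr_const ?card_ord ?natrX // => j _; rewrite eqxx.
have [j abj] : exists j, a j != b j.
  by apply/existsP; apply: contra_neqT ab => /existsPn abj; apply/ffunP => j; apply/eqP/negPn.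
by rewrite (bigD1 j) //= (negbTE abj) mul0r.
Qed.

Lemma parseval_grid (u : mindex d -> R[i]) :
  \sum_(k : {ffun 'I_d -> 'I_K}) cabs (\sum_(a <- mbox d K) u a * mmono (grid_pt k) a) ^+ 2
  = (K ^ d)%:R * \sum_(a <- mbox d K) cabs (u a) ^+ 2.
Proof.
apply: (@complexI R); rewrite rmorphM rmorph_nat !rmorph_sum /=.
under eq_bigr do rewrite cabs2E rmorph_sum big_distrlr /=.
rewrite exchange_big mulr_sumr; apply: eq_big_seq => a aK /=.
rewrite exchange_big /= cabs2E.
under eq_bigr => b _ do under eq_bigr do rewrite rmorphM mulrACA.
transitivity (\sum_(b <- mbox d K) if a == b then (K ^ d)%:R * (u a * (u a)^*) else 0).
  apply: eq_big_seq => b bK; rewrite -mulr_sumr sum_grid_mmono_conj //.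
  by case: eqVneq => [<-|]; rewrite ?mulr0 // mulrC.
rewrite (@sum_reindex_supp _ _ _ [:: a] _ id) ?mbox_uniq ?big_seq1 ?eqxx //.
- by move=> b; rewrite mem_seq1 => /eqP ->.
- by move=> b _; rewrite map_id mem_seq1 eq_sym => /negbTE ->.
Qed.

End RootOfUnityGrid.

Lemma bernoulli_ineq (R : realFieldType) (t : R) (n : nat) :
  0 <= t -> t <= 1 -> 1 - n%:R * t <= (1 - t) ^+ n.
Proof.
move=> t0 t1; elim: n => [|n IH]; first by rewrite mul0r subr0 expr0.
have t1' : 0 <= 1 - t by rewrite subr_ge0.
rewrite exprS -natr1; apply: le_trans (ler_wpM2l t1' IH).
have n0 : 0 <= n%:R :> R by [].
nra.
Qed.

Lemma ler_of_expr_mul (R : realFieldType) (S B : R) (n : nat) : 0 <= S ->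
  (forall r, 0 < r -> r < 1 -> r ^+ n * S <= B) -> S <= B.
Proof.
move=> S0 rSB.
have B0 : 0 <= B.
  apply: le_trans (rSB 2^-1 _ _) => //; last by rewrite invf_lt1 // ltr1n.
  by rewrite mulr_ge0 // exprn_ge0.
rewrite leNgt; apply/negP => BS.
(* t > 0 is chosen with n t S < S - B, so that Bernoulli's inequality gives
   (1 - t)^n S > B. *)
pose q := n%:R * S + S + 1.
have n0 : 0 <= n%:R :> R by [].
have q0 : 0 < q by rewrite /q; nra.
pose t := (S - B) / (2 * q).
have tq : t * (2 * q) = S - B by rewrite /t mulfVK // mulf_neq0 // gt_eqF.
have t0 : 0 < t by rewrite /t divr_gt0 // ?subr_gt0 // mulr_gt0.
have t1 : t < 1 by rewrite /t ltr_pdivrMr ?mul1r ?mulr_gt0 // /q; nra.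
have := rSB (1 - t); rewrite subr_gt0 t1 ltrBlDr ltrDl t0 => /(_ isT isT) tSB.
have : (1 - n%:R * t) * S <= B.
  by apply: le_trans tSB; apply: ler_wpM2r => //; exact: bernoulli_ineq (ltW t0) (ltW t1).
rewrite /q in tq; nra.
Qed.

Section Convolution.
Variables (F : comNzRingType) (d : nat).
Implicit Types (p : mpoly.mpoly d F) (u : mindex d -> F).

Definition mindex_of (m : mpoly.multinom d) : mindex d :=
  [ffun j => mpoly.fun_of_multinom m j].

(* [mconv p u] is [p(S) u] for the unweighted multishift [S], whose monomial
   [S^m] moves [u] by [m]. *)
Definition mconv p u (a : mindex d) : F :=
  \sum_(m <- mpoly.msupp p)
     mpoly.mcoeff m p * (if mle (mindex_of m) a then u (msub a (mindex_of m)) else 0).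

Lemma msupp_coord_lt p (m : mpoly.multinom d) (j : 'I_d) :
  m \in mpoly.msupp p -> (mpoly.fun_of_multinom m j < mpoly.msize p)%N.
Proof.
move=> /mpoly.msize_mdeg_lt; apply: leq_ltn_trans.
by rewrite mpoly.mdegE (bigD1 j) //= leq_addr.
Qed.

Lemma sum_mconv_mmono p u N K (z : 'I_d -> F) :
  (N + mpoly.msize p <= K)%N -> (forall a, a \notin mbox d N -> u a = 0) ->
  \sum_(a <- mbox d K) mconv p u a * mmono z a
  = mpoly.meval z p * \sum_(b <- mbox d K) u b * mmono z b.
Proof.
move=> NK u0; have NK' : (N <= K)%N by apply: leq_trans NK; apply: leq_addr.
rewrite [in RHS](sum_mbox_supp NK') => [|a /u0 ->]; last by rewrite mul0r.
rewrite mpoly.mevalE mulr_suml /mconv; under eq_bigr do rewrite mulr_suml.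
rewrite exchange_big /=; apply: eq_big_seq => m mp.
rewrite (@sum_reindex_supp _ _ _ (mbox d N) (mbox d K) (fun b => madd b (mindex_of m))).
- rewrite mulr_sumr; apply: eq_bigr => b _ /=.
  rewrite mle_madd maddK /mmono.
  have -> : \prod_(j < d) z j ^+ madd b (mindex_of m) j
            = \prod_(j < d) z j ^+ b j * \prod_(j < d) z j ^+ m j.
    by rewrite -big_split; apply: eq_bigr => j _; rewrite !ffunE exprD.
  ring.
- exact: mbox_uniq.
- exact: mbox_uniq.
- by move=> x y _ _; exact: (can_inj (maddK (mindex_of m))).
- move=> b; rewrite !mem_mbox => /forallP bN; apply/forallP => j; rewrite !ffunE.
  have := msupp_coord_lt j mp; have := bN j; lia.
- move=> a _ na; case: ifP => [ma|]; last by rewrite mulr0 mul0r.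
  have [sN|/u0 ->] := boolP (msub a (mindex_of m) \in mbox d N); last by rewrite mulr0 mul0r.
  by move: na; rewrite -{1}(msubK ma) (map_f (fun b => madd b (mindex_of m)) sN).
Qed.

End Convolution.

Lemma exists_prim_root (C : numClosedFieldType) (K : nat) :
  (0 < K)%N -> exists w : C, K.-primitive_root w.
Proof.
move=> K0; have [r Dp] := closed_field_poly_normal ('X^K - 1 : {poly C}).
rewrite (monicP _) ?monicXnsubC // scale1r in Dp.
have rK : all K.-unity_root r by apply/allP => z; rewrite -root_prod_XsubC -Dp.
have sz_r : (K < (size r).+1)%N by rewrite -(size_prod_XsubC r id) -Dp size_XnsubC.
have [|z] := hasP (cyclic.has_prim_root K0 rK _ sz_r); last by exists z.
rewrite -separable.separable_prod_XsubC -Dp cyclotomic.separable_Xn_sub_1 //.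
by rewrite pnatr_eq0 -lt0n.
Qed.

Section ConvolutionBound.
Variables (R : realType) (d : nat) (p : mpoly.mpoly d R[i]) (M : R).
Hypothesis p_bound : forall z : 'I_d -> R[i],
  (forall k, cabs (z k) < 1) -> cabs (mpoly.meval z p) <= M.
Local Open Scope complex_scope.

Lemma poly_bound_ge0 : 0 <= M.
Proof.
apply: le_trans (cabs_ge0 _) (p_bound (z := fun _ => 0) _) => k.
by rewrite cabs0 ltr01.
Qed.

(* Parseval on the grid of [K]-th roots of unity scaled by [r]: at such points
   the generating function of [mconv p u] is [p] times that of [u]. *)
Lemma mconv_bound_radial N K (w : R[i]) (u : mindex d -> R[i]) :
  K.-primitive_root w -> (N + mpoly.msize p <= K)%N ->
  (forall a, a \notin mbox d N -> u a = 0) -> forall r, 0 < r -> r < 1 ->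
  r ^+ (2 * (d * K)) * \sum_(a <- mbox d K) cabs (mconv p u a) ^+ 2
  <= M ^+ 2 * \sum_(a <- mbox d N) cabs (u a) ^+ 2.
Proof.
move=> w_prim NK u0 r r0 r1; have r0' := ltW r0; have r1' := ltW r1.
have NK' : (N <= K)%N by apply: leq_trans NK; apply: leq_addr.
pose damp (v : mindex d -> R[i]) a := v a * (r ^+ msum a)%:C.
pose z (k : {ffun 'I_d -> 'I_K}) j := r%:C * grid_pt w k j.
have z_in k j : cabs (z k j) < 1.
  rewrite cabsM ger0_cabs // cabsX (_ : cabs w = 1) ?expr1n ?mulr1 //.
  by apply: (@complexI R); rewrite cabsE (norm_prim_root w_prim).
have damp_mmono (v : mindex d -> R[i]) k : \sum_(a <- mbox d K) damp v a * mmono (grid_pt w k) a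
    = \sum_(a <- mbox d K) v a * mmono (z k) a.
  by apply: eq_bigr => a _; rewrite /damp mmono_scale rmorphXn mulrA.
have damped_bound : \sum_(a <- mbox d K) cabs (damp (mconv p u) a) ^+ 2
    <= M ^+ 2 * \sum_(a <- mbox d K) cabs (damp u a) ^+ 2.
  have Kd0 : 0 < (K ^ d)%:R :> R by rewrite ltr0n expn_gt0 (prim_order_gt0 w_prim).
  rewrite -(ler_pM2l Kd0) mulrCA -!(parseval_grid w_prim) mulr_sumr.
  apply: ler_sum => k _; rewrite !damp_mmono (sum_mconv_mmono _ NK u0) cabsM exprMn.
  rewrite ler_wpM2r ?cabs2_ge0 // lerXn2r ?nnegrE ?cabs_ge0 ?poly_bound_ge0 //.
  exact: p_bound.
apply: le_trans (le_trans damped_bound _).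
  rewrite mulr_sumr big_seq [leRHS]big_seq; apply: ler_sum => a aK.
  rewrite cabsM ger0_cabs ?exprn_ge0 // exprMn mulrC ler_wpM2l ?cabs2_ge0 //.
  by rewrite -exprM ler_wiXn2l // mulnC leq_mul2l msum_mbox.
rewrite ler_wpM2l ?exprn_ge0 ?poly_bound_ge0 // -(sum_mbox_supp NK') => [|a /u0 ->];
  last by rewrite cabs0 expr0n.
apply: ler_sum => a _; rewrite cabsM ger0_cabs ?exprn_ge0 // exprMn.
by rewrite ler_piMr ?cabs2_ge0 // exprn_ile1 ?exprn_ge0 ?exprn_ile1.
Qed.

Lemma mconv_bound N (u : mindex d -> R[i]) : (forall a, a \notin mbox d N -> u a = 0) ->
  \sum_(a <- mbox d N) cabs (mconv p u a) ^+ 2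
  <= M ^+ 2 * \sum_(a <- mbox d N) cabs (u a) ^+ 2.
Proof.
move=> u0; pose K := (N + mpoly.msize p).+1.
have [w w_prim] := @exists_prim_root R[i] K isT.
have NK : (N + mpoly.msize p <= K)%N by [].
have sum_ge0 : 0 <= \sum_(a <- mbox d K) cabs (mconv p u a) ^+ 2.
  by apply: sumr_ge0 => a _; exact: cabs2_ge0.
apply: le_trans _ (ler_of_expr_mul sum_ge0 (mconv_bound_radial w_prim NK u0)).
apply: ler_sum_sub_uniq; rewrite ?mbox_uniq //; last by move=> a _; exact: cabs2_ge0.
by apply: sub_mbox; apply: leq_trans NK; apply: leq_addr.
Qed.

(* Values of [mconv p u] on a down-set only involve values of [u] on it. *)
Lemma mconv_bound_downset N (u : mindex d -> R[i]) (P : pred (mindex d)) :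
  (forall a b, mle b a -> P a -> P b) ->
  \sum_(a <- mbox d N) (if P a then cabs (mconv p u a) ^+ 2 else 0)
  <= M ^+ 2 * \sum_(a <- mbox d N) (if P a then cabs (u a) ^+ 2 else 0).
Proof.
move=> P_down; pose v a := if P a && (a \in mbox d N) then u a else 0.
have v0 a : a \notin mbox d N -> v a = 0 by move/negbTE => aN; rewrite /v aN andbF.
have -> : \sum_(a <- mbox d N) (if P a then cabs (u a) ^+ 2 else 0)
        = \sum_(a <- mbox d N) cabs (v a) ^+ 2.
  apply: eq_big_seq => a aN; rewrite /v aN andbT.
  by case: ifP; rewrite ?cabs0 ?expr0n.
apply: le_trans _ (mconv_bound v0); rewrite big_seq [leRHS]big_seq.
apply: ler_sum => a aN; case: ifP => [Pa|_]; last exact: cabs2_ge0.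
suff -> : mconv p u a = mconv p v a by [].
apply: eq_bigr => m _; case: ifP => // _.
by rewrite /v (P_down a _ (mle_msub a _) Pa) (mbox_mle (mle_msub a _) aN).
Qed.

Lemma mconv_bound_weighted N (u : mindex d -> R[i]) (om : mindex d -> R) :
  (forall a, 0 <= om a) -> (forall a b, mle b a -> om a <= om b) ->
  \sum_(a <- mbox d N) om a * cabs (mconv p u a) ^+ 2
  <= M ^+ 2 * \sum_(a <- mbox d N) om a * cabs (u a) ^+ 2.
Proof.
have [c] := ubnP (count (fun a => 0 < om a) (mbox d N)).
elim: c om => // c IH om cnt om0 om_anti.
have [om_pos|/hasPn om_npos] := boolP (has (fun a => 0 < om a) (mbox d N)); last first.
  have om_eq0 a : a \in mbox d N -> om a = 0.
    by move=> aN; apply/eqP; rewrite eq_le om0 andbT leNgt om_npos.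
  rewrite big_seq big1 => [|a aN]; last by rewrite om_eq0 ?mul0r.
  rewrite mulr_ge0 ?exprn_ge0 ?poly_bound_ge0 // sumr_ge0 // => a _.
  by rewrite mulr_ge0 ?cabs2_ge0.
(* Peel off [mu] times the indicator of the down-set [P] where [om > 0], with
   [mu] the least positive weight: the rest has fewer positive weights. *)
have s_neq0 : [seq a <- mbox d N | 0 < om a] != [::].
  by rewrite -size_eq0 size_filter -lt0n -has_count.
have [a0] := exists_argmin_seq om s_neq0; rewrite mem_filter => /andP[om_a0 a0N] a0_min.
pose mu := om a0; pose P a := (a \in mbox d N) && (0 < om a).
have P_down a b : mle b a -> P a -> P b.
  move=> ba /andP[aN oa]; rewrite /P (mbox_mle ba aN).
  exact: lt_le_trans oa (om_anti _ _ ba).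
pose om' a := if P a then om a - mu else 0.
have om'0 a : 0 <= om' a.
  by rewrite /om'; case: ifP => // /andP[aN oa]; rewrite subr_ge0 a0_min // mem_filter oa.
have om'_anti a b : mle b a -> om' a <= om' b.
  move=> ba; rewrite /om'; case: ifP => [Pa|_]; last exact: om'0.
  by rewrite (P_down a b ba Pa) lerD2r om_anti.
have cnt' : (count (fun a => (0 < om' a)%R) (mbox d N) < c)%N.
  have sub : subpred (fun a => 0 < om' a) (predD1 (fun a => 0 < om a) a0).
    move=> a; rewrite /om' /=; case: ifP => [/andP[_ oa]|]; last by rewrite ltxx.
    by rewrite oa andbT subr_gt0; apply: contraTneq => ->; rewrite ltxx.
  rewrite (count_predD1 (fun a => 0 < om a) (mbox_uniq d N) a0N) /= om_a0 in cnt.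
  exact: leq_ltn_trans (sub_count sub (mbox d N)) cnt.
have layer (X : mindex d -> R) : \sum_(a <- mbox d N) om a * X a
    = mu * \sum_(a <- mbox d N) (if P a then X a else 0) + \sum_(a <- mbox d N) om' a * X a.
  rewrite mulr_sumr -big_split; apply: eq_big_seq => a aN /=.
  rewrite /om'; case: ifP => [_|]; first by ring.
  rewrite /P aN /= => /negbT; rewrite -leNgt => oa.
  have -> : om a = 0 by apply/eqP; rewrite eq_le oa om0.
  by rewrite mulr0 !mul0r addr0.
rewrite !layer mulrDr; apply: lerD; last exact: IH.
by rewrite mulrCA ler_wpM2l ?(ltW om_a0) //; exact: mconv_bound_downset.
Qed.

End ConvolutionBound.

Section WeightedMultishift.
Variables (F : fieldType) (d : nat) (al : 'I_d -> mindex d -> F).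
Hypothesis al_comm : forall i j a,
  al i (addeps a j) * al j a = al j (addeps a i) * al i a.
Hypothesis al_neq0 : forall j a, al j a != 0.

Definition wshift j (X : mindex d -> F) : mindex d -> F :=
  fun a => if a j == 0%N then 0 else al j (subeps a j) * X (subeps a j).

Definition wshift_mono (m : 'I_d -> nat) (X : mindex d -> F) : mindex d -> F :=
  foldr (fun j y => iter (m j) (wshift j) y) X (enum 'I_d).

Definition ushift j (Y : mindex d -> F) : mindex d -> F :=
  fun a => if a j == 0%N then 0 else Y (subeps a j).

Definition ushift_mono (m : 'I_d -> nat) (Y : mindex d -> F) : mindex d -> F :=
  foldr (fun j y => iter (m j) (ushift j) y) Y (enum 'I_d).

(* The product of the weights along one monotone lattice path from [0] to [a];
   by [al_comm] all such paths give the same product, see [wprod_addeps]. *)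
Fixpoint path_wprod (s : nat) (a : mindex d) : F :=
  if s is s'.+1 then
    if [pick j | (0 < a j)%N] is Some j
    then al j (subeps a j) * path_wprod s' (subeps a j) else 1
  else 1.

Definition wprod (a : mindex d) : F := path_wprod (msum a) a.

Lemma wprod_neq0 a : wprod a != 0.
Proof.
rewrite /wprod; move: (msum a) => s; elim: s a => [|s IH] a /=; first exact: oner_neq0.
by case: pickP => [j _|_]; rewrite ?mulf_neq0 ?oner_neq0.
Qed.

Lemma wprod_addeps a j : wprod (addeps a j) = al j a * wprod a.
Proof.
have [s] := ubnP (msum a); elim: s a j => // s IH a j sa.
rewrite /wprod msum_addeps /=; case: pickP => [i ai|no_pos]; last first.
  by have := no_pos j; rewrite /= ffunE eqxx addn1.
case: (eqVneq i j) => [->|ij]; first by rewrite addepsK.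
move: ai; rewrite /= ffunE (negbTE ij) addn0 => ai.
set c := subeps a i; have ac : a = addeps c i by rewrite subepsK.
have sc : (msum c < s)%N by move: sa; rewrite ac msum_addeps ltnS.
rewrite subeps_addeps // -/c.
have -> : path_wprod (msum a) (addeps c j) = wprod (addeps c j).
  by rewrite /wprod !msum_addeps ac msum_addeps.
have -> : path_wprod (msum a) a = al i c * wprod c by rewrite -(IH c i sc) -ac.
by rewrite (IH c j sc) ac !mulrA al_comm.
Qed.

Lemma wshift_wprod j Y :
  wshift j (fun a => wprod a * Y a) = (fun a => wprod a * ushift j Y a).
Proof.
apply: funext => a; rewrite /wshift /ushift; case: ifP => [_|aj]; first by rewrite mulr0.
by rewrite mulrA -wprod_addeps subepsK // lt0n aj.
Qed.

Lemma wshift_mono_wprod m Y :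
  wshift_mono m (fun a => wprod a * Y a) = (fun a => wprod a * ushift_mono m Y a).
Proof.
rewrite /wshift_mono /ushift_mono; elim: (enum 'I_d) => [//|j l IH] /=.
by rewrite IH; elim: (m j) => [//|t IHt] /=; rewrite IHt wshift_wprod.
Qed.

Lemma iter_ushift j t Y a : iter t (ushift j) Y a =
  if (t <= a j)%N then Y [ffun i => a i - (if i == j then t else 0)]%N else 0.
Proof.
elim: t a => [|t IH] a /=.
  by congr Y; apply/ffunP => i; rewrite ffunE; case: ifP; rewrite subn0.
rewrite /ushift; case: (posnP (a j)) => [->//|aj].
rewrite IH subepsE eqxx subn1 -ltnS prednK //; case: ifP => // _.
congr Y; apply/ffunP => i; rewrite !ffunE.
by case: (i == j); rewrite ?subn0 // -subnDA add1n.
Qed.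

Lemma foldr_ushift m (l : seq 'I_d) Y a : uniq l ->
  foldr (fun j y => iter (m j) (ushift j) y) Y l a
  = if all (fun j => m j <= a j)%N l
    then Y [ffun i => a i - (if i \in l then m i else 0)]%N else 0.
Proof.
elim: l a => [|j l IH] a /=.
  by move=> _; congr Y; apply/ffunP => i; rewrite ffunE subn0.
move=> /andP[jl ul]; rewrite iter_ushift; case: (leqP (m j) (a j)) => //= mj.
rewrite IH //.
have a_l : {in l, forall i, (a i - (if i == j then m j else 0))%N = a i}.
  by move=> i il; case: eqVneq => [eij|]; rewrite ?subn0 //; move: jl; rewrite -eij il.
rewrite (eq_in_all (a2 := fun i => m i <= a i)%N); last by move=> i il /=; rewrite ffunE a_l.
case: ifP => // _; congr Y; apply/ffunP => i; rewrite !ffunE in_cons.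
by case: (eqVneq i j) => [->|ij] /=; rewrite ?(negbTE jl) ?subn0.
Qed.

Lemma ushift_monoE m Y a : ushift_mono m Y a =
  if mle [ffun j => m j] a then Y (msub a [ffun j => m j]) else 0.
Proof.
rewrite /ushift_mono foldr_ushift ?enum_uniq //.
have -> : all (fun j => m j <= a j)%N (enum 'I_d) = mle [ffun j => m j] a.
  apply/allP/forallP => [mle_a j|mle_a j _]; last by have := mle_a j; rewrite ffunE.
  by rewrite ffunE; apply: mle_a; rewrite mem_enum.
by case: ifP => // _; congr Y; apply/ffunP => i; rewrite !ffunE mem_enum.
Qed.

End WeightedMultishift.

Section ContractiveWeights.
Variables (R : realType) (d : nat) (al : 'I_d -> mindex d -> R[i]).
Hypothesis al_comm : forall i j a,
  al i (addeps a j) * al j a = al j (addeps a i) * al i a.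
Hypothesis al_le1 : forall j a, cabs (al j a) ^+ 2 <= 1.

Lemma wprod_norm_addeps a j : cabs (wprod al (addeps a j)) ^+ 2 <= cabs (wprod al a) ^+ 2.
Proof. by rewrite (wprod_addeps al_comm) cabsM exprMn ler_piMl ?cabs2_ge0. Qed.

Lemma wprod_norm_antitone a b : mle b a -> cabs (wprod al a) ^+ 2 <= cabs (wprod al b) ^+ 2.
Proof.
move=> ba; have [s] := ubnP (msum (msub a b)); elim: s a ba => // s IH a ba sab.
have [->|ab] := eqVneq a b; first exact: lexx.
have [j bj] : exists j, (b j < a j)%N.
  apply/existsP; apply: contraNT ab => /existsPn /= a_le; apply/eqP/ffunP => j.
  by apply/eqP; rewrite eqn_leq (forallP ba j) leqNgt a_le.
have aj : (0 < a j)%N by apply: leq_ltn_trans bj.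
have ba' : mle b (subeps a j).
  apply/forallP => i; rewrite ffunE; have := forallP ba i.
  by case: (eqVneq i j) => [->|_] /=; rewrite ?subn0 //; lia.
apply: le_trans (IH _ ba' _); first by rewrite -{1}(subepsK aj) wprod_norm_addeps.
move: sab; rewrite -{1}(subepsK aj) (_ : msub (addeps _ j) b = addeps (msub (subeps a j) b) j).
  by rewrite msum_addeps ltnS.
apply/ffunP => i; rewrite !ffunE; have := forallP ba' i.
by case: (eqVneq i j) => [->|_] /=; rewrite ?subn0 ?addn0 //; lia.
Qed.

End ContractiveWeights.

Lemma mul_diag_mxE (F : pzRingType) n m (B : 'M[F]_n) (D : 'M[F]_(n, m)) k l :
  is_diag_mx B -> (B *m D) k l = B k k * D k l.
Proof.
move=> /forallP B_diag; rewrite mxE (bigD1 k) //= big1 ?addr0 // => i ik.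
have /forallP/(_ i)/implyP := B_diag k.
by rewrite eq_sym => /(_ ik)/eqP ->; rewrite mul0r.
Qed.

Section L2Norm.
Variables (R : realType) (d n : nat).
Implicit Types (v : 'cV[R[i]]_n) (x y : mindex d -> 'cV[R[i]]_n).

Lemma vnorm2_ge0 v : 0 <= vnorm2 v.
Proof. by apply: sumr_ge0 => k _; exact: cabs2_ge0. Qed.

Lemma vnorm2_ge_coord v k : cabs (v k 0) ^+ 2 <= vnorm2 v.
Proof. by rewrite /vnorm2 (bigD1 k) //= lerDl sumr_ge0 // => i _; exact: cabs2_ge0. Qed.

Lemma vnorm2_0 : vnorm2 (0 : 'cV[R[i]]_n) = 0.
Proof. by rewrite /vnorm2 big1 // => k _; rewrite mxE cabs0 expr0n. Qed.

Lemma vnorm2_delta k : vnorm2 (delta_mx k 0 : 'cV[R[i]]_n) = 1.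
Proof.
rewrite /vnorm2 (bigD1 k) //= big1 ?addr0 => [|i ik]; first by rewrite mxE !eqxx cabs1 expr1n.
by rewrite mxE (negbTE ik) cabs0 expr0n.
Qed.

Lemma vnorm2_le_l2norm2 x a : ((vnorm2 (x a))%:E <= l2norm2 x)%E.
Proof.
apply: esum_ge; exists [set a]%classic; first by split; [exact: finite_set1|].
by rewrite fsbig_set1.
Qed.

Lemma l2norm2_single (a : mindex d) v :
  l2norm2 (fun b => if b == a then v else 0) = (vnorm2 v)%:E.
Proof.
have vnorm2_if b : (vnorm2 (if b == a then v else 0))%:E
                   = if b \in [set a]%classic then (vnorm2 v)%:E else 0%E.
  case: (eqVneq b a) => [->|ba]; first by rewrite mem_set.
  by rewrite memNset ?vnorm2_0 // => /= eba; rewrite eba eqxx in ba.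
rewrite /l2norm2 (eq_esum (fun b _ => vnorm2_if b)) -esum_mkcond esum_set1 //.
by rewrite lee_fin vnorm2_ge0.
Qed.

(* Every finite subfamily of indices lies in some box [mbox d N]. *)
Lemma l2norm2_le_mbox x y (c : R) : 0 <= c ->
  (forall N, \sum_(a <- mbox d N) vnorm2 (y a) <= c * \sum_(a <- mbox d N) vnorm2 (x a)) ->
  (l2norm2 y <= c%:E * l2norm2 x)%E.
Proof.
move=> c0 y_le; rewrite {1}/l2norm2 /esum; apply: ge_ereal_sup => _ [X [finX _] <-].
rewrite fsbig_finite //= sumEFin.
set s := finmap.enum_fset (fset_set X).
pose N := (\sum_(a <- s) msum a).+1.
have sN : {subset s <= mbox d N}.
  move=> a sa; rewrite mem_mbox; apply/forallP => j.
  by rewrite ltnS; apply: leq_trans (leq_msum a j) _; rewrite (big_rem a) //= leq_addr.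
apply: (@le_trans _ _ ((c * \sum_(a <- mbox d N) vnorm2 (x a))%:E)).
  rewrite lee_fin; apply: le_trans (y_le N); apply: ler_sum_sub_uniq => //.
  - exact: finmap.fset_uniq.
  - exact: mbox_uniq.
  - by move=> a _; exact: vnorm2_ge0.
rewrite EFinM lee_pmul ?lee_fin ?sumr_ge0 // => [a _|]; first exact: vnorm2_ge0.
apply: esum_ge; exists [set` mbox d N]%classic; first by split; [exact: finite_seq|].
by rewrite -fsbig_seq ?mbox_uniq // sumEFin.
Qed.

End L2Norm.

Section DiagonalWeights.
Variables (R : realType) (n d : nat) (A : 'I_d -> mindex d -> 'M[R[i]]_n).
Hypothesis A_diag : forall j a, is_diag_mx (A j a).

Definition dweight (k : 'I_n) : 'I_d -> mindex d -> R[i] := fun j a => A j a k k.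

Lemma mshift_addeps j x a : mshift A j x (addeps a j) = A j a *m x a.
Proof. by rewrite /mshift ffunE eqxx addn1 /= addepsK. Qed.

Lemma mshift_coord k j x :
  (fun a => mshift A j x a k 0) = wshift (dweight k) j (fun a => x a k 0).
Proof.
apply: funext => a; rewrite /mshift /wshift.
by case: ifP => _; rewrite ?mul_diag_mxE ?mxE.
Qed.

Lemma mshift_mono_coord k m x :
  (fun a => mshift_mono A m x a k 0) = wshift_mono (dweight k) m (fun a => x a k 0).
Proof.
rewrite /mshift_mono /wshift_mono; elim: (enum 'I_d) => [//|j l IH] /=.
by elim: (m j) => [//|t IHt] /=; rewrite -IHt mshift_coord.
Qed.

Hypothesis A_comm : forall i j a,
  A i (addeps a j) *m A j a = A j (addeps a i) *m A i a.

Lemma dweight_comm k i j a :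
  dweight k i (addeps a j) * dweight k j a = dweight k j (addeps a i) * dweight k i a.
Proof.
by have := congr1 (fun B : 'M[R[i]]_n => B k k) (A_comm i j a); rewrite /= !mul_diag_mxE.
Qed.

Hypothesis A_unit : forall j a, A j a \in unitmx.

Lemma dweight_neq0 k j a : dweight k j a != 0.
Proof.
have := congr1 (fun B : 'M[R[i]]_n => B k k) (mulmxV (A_unit j a)).
rewrite /= mul_diag_mxE // mxE eqxx mulr1n /dweight; apply: contraPneq => ->.
by rewrite mul0r => /esym/eqP; rewrite oner_eq0.
Qed.

Lemma polyT_coord k p x a : polyT A p x a k 0
  = wprod (dweight k) a * mconv p (fun b => x b k 0 / wprod (dweight k) b) a.
Proof.
rewrite /polyT summxE /mconv mulr_sumr; apply: eq_bigr => m _.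
rewrite mxE (congr1 (fun f => f a) (mshift_mono_coord k m x)) /=.
have -> : (fun b => x b k 0) = (fun b => wprod (dweight k) b * (x b k 0 / wprod (dweight k) b)).
  by apply: funext => b; rewrite mulrC divfK // wprod_neq0 // => j c; exact: dweight_neq0.
by rewrite (wshift_mono_wprod (@dweight_comm k)) ushift_monoE mulrCA.
Qed.

Hypothesis A_contr : forall j x,
  (l2norm2 x < +oo)%E -> (l2norm2 (mshift A j x) <= l2norm2 x)%E.

(* Test contractivity of [T_j] on the unit vector [e_k] placed at [a]. *)
Lemma dweight_le1 k j a : cabs (dweight k j a) ^+ 2 <= 1.
Proof.
pose e b : 'cV[R[i]]_n := if b == a then delta_mx k 0 else 0.
have e_contr := @A_contr j e; rewrite l2norm2_single vnorm2_delta ltry in e_contr.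
rewrite -lee_fin; apply: le_trans (e_contr isT).
apply: le_trans (vnorm2_le_l2norm2 _ (addeps a j)); rewrite lee_fin.
apply: le_trans (vnorm2_ge_coord _ k).
by rewrite mshift_addeps /e eqxx mul_diag_mxE // mxE !eqxx mulr1.
Qed.

Lemma polyT_mbox_bound p M :
  (forall z : 'I_d -> R[i], (forall k, cabs (z k) < 1) -> cabs (mpoly.meval z p) <= M) ->
  forall x N, \sum_(a <- mbox d N) vnorm2 (polyT A p x a)
              <= M ^+ 2 * \sum_(a <- mbox d N) vnorm2 (x a).
Proof.
move=> p_bound x N; pose y k b := x b k 0 / wprod (dweight k) b.
have polyT_norm a : vnorm2 (polyT A p x a)
    = \sum_(k < n) cabs (wprod (dweight k) a) ^+ 2 * cabs (mconv p (y k) a) ^+ 2.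
  by apply: eq_bigr => k _; rewrite polyT_coord cabsM exprMn.
have x_norm a : vnorm2 (x a) = \sum_(k < n) cabs (wprod (dweight k) a) ^+ 2 * cabs (y k a) ^+ 2.
  apply: eq_bigr => k _; rewrite -exprMn -cabsM /y mulrC divfK // wprod_neq0 // => j c.
  exact: dweight_neq0.
under eq_bigr do rewrite polyT_norm.
under [in X in _ <= _ * X]eq_bigr do rewrite x_norm.
rewrite exchange_big [X in _ <= _ * X]exchange_big /= mulr_sumr.
apply: ler_sum => k _; apply: (mconv_bound_weighted p_bound) => [a|a b].
  exact: cabs2_ge0.
exact/wprod_norm_antitone/dweight_le1/dweight_comm.
Qed.

End DiagonalWeights.

Unset Implicit Arguments.

Theorem corollary3p5 (R : realType) (n d : nat)
    (A : 'I_d -> mindex d -> 'M[R[i]]_n) :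
  (0 < n)%N -> (0 < d)%N ->
  (* weights are invertible diagonal matrices *)
  (forall (j : 'I_d) (a : mindex d), is_diag_mx (A j a) /\ A j a \in unitmx) ->
  (* sup_alpha ||A^(j)_alpha|| < oo *)
  (forall j : 'I_d, exists K : R, forall (a : mindex d) (v : 'cV[R[i]]_n),
      vnorm2 (A j a *m v) <= K * vnorm2 v) ->
  (* commutativity condition *)
  (forall (i j : 'I_d) (a : mindex d),
      A i (addeps a j) *m A j a = A j (addeps a i) *m A i a) ->
  (* contractive: ||T_j|| <= 1 on l^2 *)
  (forall (j : 'I_d) (x : mindex d -> 'cV[R[i]]_n),
      (l2norm2 x < +oo)%E -> (l2norm2 (mshift A j x) <= l2norm2 x)%E) ->
  (* von Neumann's inequality *)
  forall (p : mpoly.mpoly d R[i]) (M : R),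
    (forall z : 'I_d -> R[i], (forall k, cabs (z k) < 1) ->
        cabs (mpoly.meval z p) <= M) ->
    forall x : mindex d -> 'cV[R[i]]_n, (l2norm2 x < +oo)%E ->
      (l2norm2 (polyT A p x) <= (M ^+ 2)%:E * l2norm2 x)%E.
Proof.
(* The bound on the weights follows from contractivity, and the estimate
   holds without assuming [l2norm2 x] finite. *)
move=> _ _ A_diag_unit _ A_comm A_contr p M p_bound x _.
have A_diag j a := proj1 (A_diag_unit j a).
have A_unit j a := proj2 (A_diag_unit j a).
apply: l2norm2_le_mbox; first by rewrite exprn_ge0 ?(poly_bound_ge0 p_bound).
exact: (polyT_mbox_bound A_diag A_comm A_unit A_contr p_bound x).
Qed.
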